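(* For any set $\mathcal{O}$ of upwards closed modalities, the logical preorder $\sqsubseteq_{\mathcal{V}^+}$ (on closed values and on closed computations of each type) is identical to applicative $\mathcal{O}$-similarity.
   Context: Language: types $\tau ::= \mathbf{1} \mid \mathbf{N} \mid \tau \to \tau'$; signature $\Sigma$ of effect operations with arities $\alpha^n\to\alpha$, $\mathbf{N}\times\alpha^n\to\alpha$, $\alpha^{\mathbf{N}}\to\alpha$ or $\mathbf{N}\times\alpha^{\mathbf{N}}\to\alpha$. Values $V ::= * \mid Z \mid S(V) \mid \lambda x{:}\tau.M \mid x$; computations $M ::= VW \mid \mathbf{return}\,V \mid \mathbf{let}\ M\Rightarrow x\ \mathbf{in}\ N \mid \mathbf{fix}(V) \mid \mathbf{case}\ V\ \mathbf{of}\ \{Z\Rightarrow M; S(x)\Rightarrow N\} \mid \sigma(M_0,\dots) \mid \sigma(V;M_0,\dots) \mid \sigma(V)\mid\sigma(V;W)$, simply typed call-by-value. $\mathit{Val}(\tau)$, $\mathit{Com}(\tau)$: closed values/computations; $\overline{n}=S^n(Z)$. Effect trees $TX$: possibly infinite trees with leaves $\bot$ or elements of $X$ and internal nodes labelled by effect operations $\sigma$ (or $\sigma_m$, $m\in\mathbb{N}$, for arities with a $\mathbf{N}$ parameter) with $n$ or $\mathbb{N}$-many children according to the arity; $t\le t'$ iff $t$ results from $t'$ by replacing subtrees with $\bot$. Each $M\in\mathit{Com}(\tau)$ has an operational effect tree $|M|\in T(\mathit{Val}(\tau))$ from call-by-value evaluation (leaves = returned values, nodes = effect operations encountered, $\bot$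 = divergence). Modalities: set $\mathcal{O}$, each $o$ with $[\![o]\!]\subseteq T\mathbf{1}$; for $t\in TX$, $P\subseteq X$, $t[\in P]\in T\mathbf{1}$ replaces leaves in $P$ by $*$ and other $X$-leaves by $\bot$; $o(A)=\{t\mid t[\in A]\in[\![o]\!]\}$. Upwards closed: $[\![o]\!]$ upward closed under $\le$. Logic $\mathcal{V}^+$: value formulas $VF(\tau)$ and computation formulas $CF(\tau)$: $\{n\}\in VF(\mathbf{N})$; $(V\mapsto\Phi)\in VF(\tau\to\tau')$ for $V\in\mathit{Val}(\tau)$, $\Phi\in CF(\tau')$; $o\,\phi\in CF(\tau)$ for $o\in\mathcal{O}$, $\phi\in VF(\tau)$; closed under arbitrary $\bigwedge,\bigvee$ (no negation). Semantics: $W\models\{n\}$ iff $W=\overline{n}$; $W\models(V\mapsto\Phi)$ iff $WV\models\Phi$; $M\models o\phi$ iff $|M|[\in\{V\mid V\models\phi\}]\in[\![o]\!]$. $V\sqsubseteq_{\mathcal{V}^+}W$ iff all formulas satisfied by $V$ are satisfied by $W$ (similarly for computations). Relator: for $R\subseteq X\times Y$ and $A\subseteq X$, $R[A]=\{y\mid\exists x\in A,\ xRy\}$; $t\,\mathcal{O}(R)\,t'$ iff $\forall A\subseteq X\ \forall o\in\mathcal{O}$, $t\in o(A)\Rightarrow t'\in o(R[A])$. An applicative $\mathcal{O}$-simulation is a family $R^v_\tau\subseteq\mathit{Val}(\tau)^2$, $R^c_\tau\subseteq\mathit{Com}(\tau)^2$ with: (1) $V R^v_{\mathbf{N}} W\Rightarrow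 V=W$; (2) $M R^c_\tau N\Rightarrow |M|\,\mathcal{O}(R^v_\tau)\,|N|$; (3) $V R^v_{\tau'\to\tau} W\Rightarrow \forall U\in\mathit{Val}(\tau')$, $VU\,R^c_\tau\,WU$. Applicative $\mathcal{O}$-similarity is the union of all applicative $\mathcal{O}$-simulations. *)

From Stdlib Require Import List Arith Lia ClassicalEpsilon.
Import ListNotations.

Set Implicit Arguments.

Inductive ty : Type :=
| TUnit : ty
| TNat : ty
| TArr : ty -> ty -> ty.

Inductive arity : Type :=
| AFin  : nat -> arity    (* alpha^n -> alpha *)
| APFin : nat -> arity    (* N x alpha^n -> alpha *)
| AInf  : arity           (* alpha^N -> alpha *)
| APInf : arity.          (* N x alpha^N -> alpha *)

Record signature : Type := Signature {
  op : Type;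
  op_arity : op -> arity
}.

(* parameter carried by a node label (sigma, or sigma_m) *)
Definition param_of (a : arity) : Type :=
  match a with AFin _ | AInf => unit | APFin _ | APInf => nat end.

(* index set of the children of a node *)
Definition child_of (a : arity) : Type :=
  match a with
  | AFin n | APFin n => {i : nat | i < n}
  | AInf | APInf => nat
  end.

Definition mk_param (a : arity) (p : nat) : param_of a :=
  match a as a0 return param_of a0 with
  | AFin _ | AInf => tt
  | APFin _ | APInf => p
  end.

Definition child_nat (a : arity) : child_of a -> nat :=
  match a as a0 return child_of a0 -> nat with
  | AFin _ | APFin _ => fun i => proj1_sig i
  | AInf | APInf => fun i => i
  end.

Section Language.
Variable Sg : signature.

(* Syntax (de Bruijn indices; lambda-abstractions are annotated). *)
Inductive val : Type :=
| VUnit : val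
| VZ : val
| VS : val -> val
| VLam : ty -> comp -> val          (* \x:tau. M   (binds index 0) *)
| VVar : nat -> val
with comp : Type :=
| CApp : val -> val -> comp
| CRet : val -> comp
| CLet : comp -> comp -> comp       (* let M => x in N  (N binds index 0) *)
| CFix : val -> comp
| CCase : val -> comp -> comp -> comp
    (* case V of {Z => M; S(x) => N}   (N binds index 0) *)
| COp : op Sg -> list comp -> comp
| COpP : op Sg -> val -> list comp -> comp
| COpF : op Sg -> val -> comp
| COpPF : op Sg -> val -> val -> comp.

Fixpoint num (n : nat) : val :=
  match n with 0 => VZ | S n' => VS (num n') end.

Fixpoint nat_of_val (v : val) : option nat :=
  match v with
  | VZ => Some 0
  | VS v' => option_map S (nat_of_val v')
  | _ => None
  end.

Inductive vty : list ty -> val -> ty -> Prop :=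
| ty_unit G : vty G VUnit TUnit
| ty_z G : vty G VZ TNat
| ty_s G v : vty G v TNat -> vty G (VS v) TNat
| ty_lam G t t' m : cty (t :: G) m t' -> vty G (VLam t m) (TArr t t')
| ty_var G n t : nth_error G n = Some t -> vty G (VVar n) t
with cty : list ty -> comp -> ty -> Prop :=
| ty_app G v w t t' : vty G v (TArr t t') -> vty G w t -> cty G (CApp v w) t'
| ty_ret G v t : vty G v t -> cty G (CRet v) t
| ty_let G m n t t' : cty G m t -> cty (t :: G) n t' -> cty G (CLet m n) t'
| ty_fix G v r t :
    vty G v (TArr (TArr r t) (TArr r t)) -> cty G (CFix v) (TArr r t)
| ty_case G v m n t :
    vty G v TNat -> cty G m t -> cty (TNat :: G) n t -> cty G (CCase v m n) t
| ty_op G s ms t :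
    op_arity Sg s = AFin (length ms) -> Forall (fun m => cty G m t) ms ->
    cty G (COp s ms) t
| ty_opp G s v ms t :
    op_arity Sg s = APFin (length ms) -> vty G v TNat ->
    Forall (fun m => cty G m t) ms -> cty G (COpP s v ms) t
| ty_opf G s v t :
    op_arity Sg s = AInf -> vty G v (TArr TNat t) -> cty G (COpF s v) t
| ty_oppf G s v w t :
    op_arity Sg s = APInf -> vty G v TNat -> vty G w (TArr TNat t) ->
    cty G (COpPF s v w) t.

Definition cval (t : ty) : Type := {v : val | vty [] v t}.
Definition ccomp (t : ty) : Type := {m : comp | cty [] m t}.

(* Substitution of a CLOSED value u for index k (indices above k are
   decremented).  Only closed values are ever substituted. *)
Fixpoint subst_v (k : nat) (u : val) (v : val) : val :=
  match v with
  | VUnit => VUnit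
  | VZ => VZ
  | VS v' => VS (subst_v k u v')
  | VLam t m => VLam t (subst_c (S k) u m)
  | VVar n => if Nat.eqb n k then u else if Nat.ltb k n then VVar (n - 1) else VVar n
  end
with subst_c (k : nat) (u : val) (m : comp) : comp :=
  match m with
  | CApp v w => CApp (subst_v k u v) (subst_v k u w)
  | CRet v => CRet (subst_v k u v)
  | CLet m1 n => CLet (subst_c k u m1) (subst_c (S k) u n)
  | CFix v => CFix (subst_v k u v)
  | CCase v m1 n => CCase (subst_v k u v) (subst_c k u m1) (subst_c (S k) u n)
  | COp s ms => COp s (map (subst_c k u) ms)
  | COpP s v ms => COpP s (subst_v k u v) (map (subst_c k u) ms)
  | COpF s v => COpF s (subst_v k u v)
  | COpPF s v w => COpPF s (subst_v k u v) (subst_v k u w)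
  end.

(* Call-by-value evaluation to a "head": either a returned value, or an
   effect operation node with its (computation) continuations. *)
Inductive res : Type :=
| RRet : val -> res
| RNode : forall s : op Sg, param_of (op_arity Sg s) -> (nat -> comp) -> res.

Inductive eval : comp -> res -> Prop :=
| e_ret v : eval (CRet v) (RRet v)
| e_app t m w r : eval (subst_c 0 w m) r -> eval (CApp (VLam t m) w) r
| e_let_ret m n v r :
    eval m (RRet v) -> eval (subst_c 0 v n) r -> eval (CLet m n) r
| e_let_node m n s p k :
    eval m (RNode s p k) ->
    eval (CLet m n) (RNode s p (fun i => CLet (k i) n))
| e_fix r t b res0 :
    (* fix(V) --> V (\x:r. let fix(V) => y in y x) *)
    eval (CApp (VLam (TArr r t) b)
               (VLam r (CLet (CFix (VLam (TArr r t) b)) (CApp (VVar 0) (VVar 1)))))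
         res0 ->
    eval (CFix (VLam (TArr r t) b)) res0
| e_case_z m n r : eval m r -> eval (CCase VZ m n) r
| e_case_s v m n r : eval (subst_c 0 v n) r -> eval (CCase (VS v) m n) r
| e_op s ms :
    op_arity Sg s = AFin (length ms) ->
    eval (COp s ms) (RNode s (mk_param _ 0) (fun i => nth i ms (CRet VUnit)))
| e_opp s v p ms :
    op_arity Sg s = APFin (length ms) -> nat_of_val v = Some p ->
    eval (COpP s v ms) (RNode s (mk_param _ p) (fun i => nth i ms (CRet VUnit)))
| e_opf s v :
    op_arity Sg s = AInf ->
    eval (COpF s v) (RNode s (mk_param _ 0) (fun i => CApp v (num i)))
| e_oppf s v w p :
    op_arity Sg s = APInf -> nat_of_val v = Some p ->
    eval (COpPF s v w) (RNode s (mk_param _ p) (fun i => CApp w (num i))).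

(* Effect trees T X: possibly infinite trees, leaves bot or in X, nodes
   labelled by sigma (or sigma_m) with children indexed by the arity. *)
CoInductive tree (X : Type) : Type :=
| TBot : tree X
| TLeaf : X -> tree X
| TNode : forall s : op Sg, param_of (op_arity Sg s) ->
          (child_of (op_arity Sg s) -> tree X) -> tree X.
Arguments TBot {X}.

CoInductive tle {X : Type} : tree X -> tree X -> Prop :=
| tle_bot t : tle TBot t
| tle_leaf x : tle (TLeaf x) (TLeaf x)
| tle_node s p k k' :
    (forall i, tle (k i) (k' i)) -> tle (TNode s p k) (TNode s p k').

CoFixpoint tmem {X : Type} (P : X -> Prop) (t : tree X) : tree unit :=
  match t with
  | TBot => TBot
  | TLeaf x => if excluded_middle_informative (P x) then TLeaf tt else TBot
  | TNode s p k => TNode s p (fun i => tmem P (k i))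
  end.

(* The (unique, eval being deterministic) head of a computation, if any. *)
Definition eval_res (m : comp) : option res :=
  match excluded_middle_informative (exists r, eval m r) with
  | left H => Some (proj1_sig (constructive_indefinite_description _ H))
  | right _ => None
  end.

CoFixpoint optree (m : comp) : tree val :=
  match eval_res m with
  | None => TBot
  | Some (RRet v) => TLeaf v
  | Some (RNode s p k) =>
      TNode s p (fun i => optree (k (child_nat _ i)))
  end.

Variable O : Type.
Variable sem : O -> tree unit -> Prop.

Definition upward_closed : Prop :=
  forall o t t', sem o t -> tle t t' -> sem o t'.

Inductive vform : ty -> Type :=
| FNum : nat -> vform TNat
| FMap : forall t t', cval t -> cform t' -> vform (TArr t t')
| FVAnd : forall t (I : Type), (I -> vform t) -> vform t
| FVOr : forall t (I : Type), (I -> vform t) -> vform t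
with cform : ty -> Type :=
| FMod : forall t, O -> vform t -> cform t
| FCAnd : forall t (I : Type), (I -> cform t) -> cform t
| FCOr : forall t (I : Type), (I -> cform t) -> cform t.

Fixpoint vsat {t : ty} (phi : vform t) (w : val) {struct phi} : Prop :=
  match phi with
  | FNum n => w = num n
  | FMap v Phi => csat Phi (CApp w (proj1_sig v))
  | FVAnd f => forall i, vsat (f i) w
  | FVOr f => exists i, vsat (f i) w
  end
with csat {t : ty} (Phi : cform t) (m : comp) {struct Phi} : Prop :=
  match Phi with
  | FMod o phi => sem o (tmem (fun v => vsat phi v) (optree m))
  | FCAnd f => forall i, csat (f i) m
  | FCOr f => exists i, csat (f i) m
  end.

Definition lpre_v (t : ty) (V W : cval t) : Prop :=
  forall phi : vform t, vsat phi (proj1_sig V) -> vsat phi (proj1_sig W).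
Definition lpre_c (t : ty) (M N : ccomp t) : Prop :=
  forall Phi : cform t, csat Phi (proj1_sig M) -> csat Phi (proj1_sig N).

Definition lift {t : ty} (A : cval t -> Prop) : val -> Prop :=
  fun v => exists h : vty [] v t, A (exist _ v h).

Definition omod (o : O) {t : ty} (A : cval t -> Prop) (tr : tree val) : Prop :=
  sem o (tmem (lift A) tr).

Definition rimage {t : ty} (R : cval t -> cval t -> Prop) (A : cval t -> Prop)
  : cval t -> Prop := fun y => exists x, A x /\ R x y.

Definition relator (t : ty) (R : cval t -> cval t -> Prop) (tr tr' : tree val)
  : Prop :=
  forall (A : cval t -> Prop) (o : O), omod o A tr -> omod o (rimage R A) tr'.

Definition capp {t' t : ty} (V : cval (TArr t' t)) (U : cval t') : ccomp t :=
  exist _ (CApp (proj1_sig V) (proj1_sig U))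
        (ty_app (proj2_sig V) (proj2_sig U)).

Definition is_app_sim (Rv : forall t, cval t -> cval t -> Prop)
                      (Rc : forall t, ccomp t -> ccomp t -> Prop) : Prop :=
  (forall V W : cval TNat, Rv TNat V W -> proj1_sig V = proj1_sig W) /\
  (forall t (M N : ccomp t), Rc t M N ->
     relator (Rv t) (optree (proj1_sig M)) (optree (proj1_sig N))) /\
  (forall t' t (V W : cval (TArr t' t)), Rv (TArr t' t) V W ->
     forall U : cval t', Rc t (capp V U) (capp W U)).

Definition sim_v (t : ty) (V W : cval t) : Prop :=
  exists Rv Rc, is_app_sim Rv Rc /\ Rv t V W.
Definition sim_c (t : ty) (M N : ccomp t) : Prop :=
  exists Rv Rc, is_app_sim Rv Rc /\ Rc t M N.

End Language.

(* Soundness: by induction on formulas, every applicative O-simulation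
   preserves satisfaction.  In the modal case, O(R) transports o(A) along R,
   where A is the set of closed values satisfying the formula; upward closure
   lets us pass between |M|[in A] and |M|[in sat phi], which differ only at
   ill-typed leaves, and |M| has none by subject reduction.
   Completeness: the logical preorder is itself an applicative O-simulation.
   For A a set of closed values, the disjunction over V in A of the
   characteristic formula of V (the conjunction of all formulas V satisfies)
   is satisfied exactly by the values logically above some element of A; so
   if M is below N and |M| is in o(A), then N satisfies o of that disjunction,
   i.e. |N| is in o of the image of A under the preorder. *)

From Stdlib Require Import List Arith Lia ClassicalEpsilon.
Import ListNotations.
Set Implicit Arguments.

Arguments VUnit {Sg}.
Arguments VZ {Sg}.
Arguments VVar {Sg}.
Arguments TBot {Sg X}.
Arguments TLeaf {Sg X}.
Arguments TNode {Sg X}.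

Section Typing.
Variable Sg : signature.

Section TypingInd.
Variables (Pv : list ty -> val Sg -> ty -> Prop) (Pc : list ty -> comp Sg -> ty -> Prop).
Hypotheses
  (H_unit : forall G, Pv G VUnit TUnit)
  (H_z : forall G, Pv G VZ TNat)
  (H_s : forall G v, Pv G v TNat -> Pv G (VS v) TNat)
  (H_lam : forall G t t' m, Pc (t :: G) m t' -> Pv G (VLam t m) (TArr t t'))
  (H_var : forall G n t, nth_error G n = Some t -> Pv G (VVar n) t)
  (H_app : forall G v w t t', Pv G v (TArr t t') -> Pv G w t -> Pc G (CApp v w) t')
  (H_ret : forall G v t, Pv G v t -> Pc G (CRet v) t)
  (H_let : forall G m n t t', Pc G m t -> Pc (t :: G) n t' -> Pc G (CLet m n) t')
  (H_fix : forall G v r t,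
      Pv G v (TArr (TArr r t) (TArr r t)) -> Pc G (CFix v) (TArr r t))
  (H_case : forall G v m n t,
      Pv G v TNat -> Pc G m t -> Pc (TNat :: G) n t -> Pc G (CCase v m n) t)
  (H_op : forall G s ms t, op_arity Sg s = AFin (length ms) ->
      Forall (fun m => Pc G m t) ms -> Pc G (COp s ms) t)
  (H_opp : forall G s v ms t, op_arity Sg s = APFin (length ms) ->
      Pv G v TNat -> Forall (fun m => Pc G m t) ms -> Pc G (COpP s v ms) t)
  (H_opf : forall G s v t, op_arity Sg s = AInf ->
      Pv G v (TArr TNat t) -> Pc G (COpF s v) t)
  (H_oppf : forall G s v w t, op_arity Sg s = APInf ->
      Pv G v TNat -> Pv G w (TArr TNat t) -> Pc G (COpPF s v w) t).

Fixpoint vty_nested_ind G v t (H : vty G v t) {struct H} : Pv G v t :=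
  match H in vty G v t return Pv G v t with
  | ty_unit _ G => H_unit G
  | ty_z _ G => H_z G
  | ty_s H1 => H_s (vty_nested_ind H1)
  | ty_lam H1 => H_lam (cty_nested_ind H1)
  | ty_var _ G n e => H_var G n e
  end
with cty_nested_ind G m t (H : cty G m t) {struct H} : Pc G m t :=
  let fix all_nested_ind G t ms (Hs : Forall (fun m => cty G m t) ms)
      : Forall (fun m => Pc G m t) ms :=
    match Hs with
    | Forall_nil _ => Forall_nil _
    | Forall_cons _ Hm Hs' => Forall_cons _ (cty_nested_ind Hm) (all_nested_ind _ _ _ Hs')
    end in
  match H in cty G m t return Pc G m t with
  | ty_app H1 H2 => H_app (vty_nested_ind H1) (vty_nested_ind H2)
  | ty_ret H1 => H_ret (vty_nested_ind H1)
  | ty_let H1 H2 => H_let (cty_nested_ind H1) (cty_nested_ind H2)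
  | ty_fix H1 => H_fix (vty_nested_ind H1)
  | ty_case H1 H2 H3 => H_case (vty_nested_ind H1) (cty_nested_ind H2) (cty_nested_ind H3)
  | ty_op _ Ha Hs => H_op _ Ha (all_nested_ind _ _ _ Hs)
  | ty_opp _ Ha Hv Hs => H_opp _ Ha (vty_nested_ind Hv) (all_nested_ind _ _ _ Hs)
  | ty_opf _ Ha H1 => H_opf _ Ha (vty_nested_ind H1)
  | ty_oppf _ Ha H1 H2 => H_oppf _ Ha (vty_nested_ind H1) (vty_nested_ind H2)
  end.

Lemma typing_ind :
  (forall G v t, vty G v t -> Pv G v t) /\ (forall G m t, cty G m t -> Pc G m t).
Proof. exact (conj vty_nested_ind cty_nested_ind). Qed.

End TypingInd.

Lemma typing_weaken :
  (forall G (v : val Sg) t, vty G v t -> forall G', vty (G ++ G') v t) /\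
  (forall G (m : comp Sg) t, cty G m t -> forall G', cty (G ++ G') m t).
Proof.
  apply typing_ind; intros; try (econstructor; eauto; fail).
  - constructor. rewrite nth_error_app1; [assumption|].
    apply nth_error_Some. congruence.
  - constructor; [assumption|]. eapply Forall_impl; [|eassumption]. auto.
  - constructor; auto. eapply Forall_impl; [|eassumption]. auto.
Qed.

Lemma vty_closed_weaken (u : val Sg) s G : vty [] u s -> vty G u s.
Proof. intro Hu. exact (proj1 typing_weaken _ _ _ Hu G). Qed.

Lemma vty_subst_var G1 s G2 (u : val Sg) n t :
  nth_error (G1 ++ s :: G2) n = Some t -> vty [] u s ->
  vty (G1 ++ G2) (subst_v (length G1) u (VVar n)) t.
Proof.
  intros E Hu; simpl.
  destruct (Nat.eqb_spec n (length G1)) as [->|Hne].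
  - rewrite nth_error_app2, Nat.sub_diag in E by lia. injection E as <-.
    apply vty_closed_weaken, Hu.
  - destruct (Nat.ltb_spec (length G1) n); constructor.
    + rewrite nth_error_app2 in E by lia. rewrite nth_error_app2 by lia.
      replace (n - length G1) with (S (n - 1 - length G1)) in E by lia. exact E.
    + rewrite nth_error_app1 in E by lia. rewrite nth_error_app1 by lia. exact E.
Qed.

Lemma typing_subst :
  (forall G (v : val Sg) t, vty G v t -> forall G1 s G2 u,
     G = G1 ++ s :: G2 -> vty [] u s ->
     vty (G1 ++ G2) (subst_v (length G1) u v) t) /\
  (forall G (m : comp Sg) t, cty G m t -> forall G1 s G2 u,
     G = G1 ++ s :: G2 -> vty [] u s ->
     cty (G1 ++ G2) (subst_c (length G1) u m) t).
Proof.
  apply typing_ind; intros; subst; simpl.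
  all: try (eapply vty_subst_var; eassumption).
  all: econstructor; try rewrite length_map; eauto.
  (* under a binder of type [a], substitute in the context [a :: G1] *)
  all: try match goal with
       | IH : forall G1 s G2 u, _ -> _ -> cty _ (subst_c _ _ ?m) _
         |- cty (?a :: ?G1 ++ _) (subst_c _ _ ?m) _ =>
           exact (IH (a :: G1) _ _ _ eq_refl ltac:(eassumption)) end.
  all: apply Forall_map; eapply Forall_impl; [|eassumption]; eauto.
Qed.

Lemma cty_subst0 (m : comp Sg) s t u : cty [s] m t -> vty [] u s -> cty [] (subst_c 0 u m) t.
Proof. intros Hm Hu. exact (proj2 typing_subst _ _ _ Hm [] _ [] _ eq_refl Hu). Qed.

Lemma vty_num n : vty [] (num Sg n) TNat.
Proof. induction n; constructor; assumption. Qed.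

Lemma vty_nat_num (v : val Sg) : vty [] v TNat -> exists n, v = num Sg n.
Proof.
  induction v as [| |v IHv| |n]; intro Hv; inversion Hv as [|?|? ? Hv'| |? ? ? Hn]; subst.
  - exists 0; reflexivity.
  - destruct (IHv Hv') as [n ->]. exists (S n); reflexivity.
  - destruct n; discriminate.
Qed.

Definition res_ty (r : res Sg) (t : ty) : Prop :=
  match r with
  | RRet v => vty [] v t
  | RNode s _ k => forall c : child_of (op_arity Sg s), cty [] (k (child_nat _ c)) t
  end.

Lemma child_nat_lt (a : arity) n (c : child_of a) :
  a = AFin n \/ a = APFin n -> child_nat a c < n.
Proof. destruct a; intros [E|E]; try discriminate; injection E as <-; exact (proj2_sig c). Qed.

Lemma eval_preserves_ty (m : comp Sg) r t : eval m r -> cty [] m t -> res_ty r t.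
Proof.
  intro Hev; revert t.
  induction Hev; intros t0 Ht; inversion Ht; subst; simpl.
  - assumption.
  - match goal with Hl : vty [] (VLam _ _) _ |- _ => inversion Hl; subst end.
    apply IHHev. eapply cty_subst0; eassumption.
  - apply IHHev2. eapply cty_subst0; [eassumption|]. apply (IHHev1 _). assumption.
  - intro c. eapply ty_let; [exact (IHHev _ ltac:(eassumption) c)|eassumption].
  -     match goal with Hl : vty [] (VLam _ _) _ |- _ => inversion Hl; subst end.
    apply IHHev. eapply ty_app; [eassumption|]. apply ty_lam. eapply ty_let.
    + apply ty_fix, vty_closed_weaken. eassumption.
    + eapply ty_app; apply ty_var; reflexivity.
  - auto.
  - match goal with Hs : vty [] (VS _) _ |- _ => inversion Hs; subst end.
    apply IHHev. eapply cty_subst0; eassumption.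
  - intro c. match goal with Hs : Forall _ ms |- _ => rewrite Forall_forall in Hs; apply Hs end.
    apply nth_In, child_nat_lt. auto.
  - intro c. match goal with Hs : Forall _ ms |- _ => rewrite Forall_forall in Hs; apply Hs end.
    apply nth_In, child_nat_lt. auto.
  - intro c. econstructor; [eassumption|apply vty_num].
  - intro c. econstructor; [eassumption|apply vty_num].
Qed.
End Typing.

Section Trees.
Variable Sg : signature.

Definition tree_frob X (t : tree Sg X) : tree Sg X :=
  match t with TBot => TBot | TLeaf x => TLeaf x | TNode s p k => TNode s p k end.

Lemma tree_frob_eq X (t : tree Sg X) : t = tree_frob t.
Proof. destruct t; reflexivity. Qed.

Lemma optree_unfold (m : comp Sg) : optree m =
  match eval_res m with
  | None => TBot
  | Some (RRet v) => TLeaf v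
  | Some (RNode s p k) => TNode s p (fun i => optree (k (child_nat _ i)))
  end.
Proof. rewrite (tree_frob_eq (optree m)); simpl. destruct (eval_res m) as [[]|]; reflexivity. Qed.

Lemma tmem_unfold X (P : X -> Prop) (t : tree Sg X) : tmem P t =
  match t with
  | TBot => TBot
  | TLeaf x => if excluded_middle_informative (P x) then TLeaf tt else TBot
  | TNode s p k => TNode s p (fun i => tmem P (k i))
  end.
Proof.
  rewrite (tree_frob_eq (tmem P t)); simpl.
  destruct t; [reflexivity| |reflexivity]. simpl. destruct excluded_middle_informative; reflexivity.
Qed.

Lemma eval_res_eval (m : comp Sg) r : eval_res m = Some r -> eval m r.
Proof.
  unfold eval_res. destruct excluded_middle_informative; [|discriminate].
  intros [= <-]. apply proj2_sig.
Qed.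

Lemma tmem_leaf_mono X (P Q : X -> Prop) (x : X) :
  (P x -> Q x) -> tle (tmem P (@TLeaf Sg X x)) (tmem Q (TLeaf x)).
Proof.
  intro HPQ. rewrite !tmem_unfold.
  destruct (excluded_middle_informative (P x)); [|constructor].
  destruct (excluded_middle_informative (Q x)); [constructor|tauto].
Qed.

Lemma tmem_mono X (P Q : X -> Prop) :
  (forall x, P x -> Q x) -> forall t : tree Sg X, tle (tmem P t) (tmem Q t).
Proof.
  intro HPQ. cofix CIH. intros [|x|s p k].
  - rewrite !tmem_unfold. constructor.
  - apply tmem_leaf_mono, HPQ.
  - rewrite !tmem_unfold. constructor. intro i. apply CIH.
Qed.

Lemma tmem_optree_mono t (P Q : val Sg -> Prop) :
  (forall v, vty [] v t -> P v -> Q v) ->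
  forall m, cty [] m t -> tle (tmem P (optree m)) (tmem Q (optree m)).
Proof.
  intro HPQ. cofix CIH. intros m Hm. rewrite (optree_unfold m).
  destruct (eval_res m) as [r|] eqn:E.
  - pose proof (eval_preserves_ty (eval_res_eval _ E) Hm) as Hr.
    destruct r as [v|s p k]; simpl in Hr.
    + apply tmem_leaf_mono, HPQ, Hr.
    + rewrite !tmem_unfold. constructor. intro i. apply CIH, Hr.
  - rewrite !tmem_unfold. constructor.
Qed.

End Trees.

Scheme vform_mut := Induction for vform Sort Prop
  with cform_mut := Induction for cform Sort Prop.
Combined Scheme form_mutind from vform_mut, cform_mut.

Section Logic.
Variables (S : signature) (O : Type) (sem : O -> tree S unit -> Prop).
Hypothesis sem_up : upward_closed sem.

Lemma omod_intro t (M : ccomp S t) o (P : val S -> Prop) (A : cval S t -> Prop) :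
  (forall V : cval S t, P (proj1_sig V) -> A V) ->
  sem o (tmem P (optree (proj1_sig M))) -> omod sem o A (optree (proj1_sig M)).
Proof.
  intros HPA HP. eapply sem_up; [exact HP|].
  apply (tmem_optree_mono (t := t)); [|exact (proj2_sig M)].
  intros v hv Pv. exists hv. exact (HPA (exist _ v hv) Pv).
Qed.

Lemma omod_elim t o (A : cval S t -> Prop) (P : val S -> Prop) tr :
  (forall V : cval S t, A V -> P (proj1_sig V)) -> omod sem o A tr -> sem o (tmem P tr).
Proof.
  intros HAP HA. eapply sem_up; [exact HA|].
  apply tmem_mono. intros v [hv Av]. exact (HAP _ Av).
Qed.

Section Soundness.
Variables (Rv : forall t, cval S t -> cval S t -> Prop)
          (Rc : forall t, ccomp S t -> ccomp S t -> Prop).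
Hypothesis Rsim : is_app_sim sem Rv Rc.

Lemma app_sim_sat :
  (forall t (phi : vform S O t) (V W : cval S t), Rv V W ->
     vsat sem phi (proj1_sig V) -> vsat sem phi (proj1_sig W)) /\
  (forall t (Phi : cform S O t) (M N : ccomp S t), Rc M N ->
     csat sem Phi (proj1_sig M) -> csat sem Phi (proj1_sig N)).
Proof.
  destruct Rsim as (Rnat & Rtree & Rarr).
  apply form_mutind; simpl.
  - intros n V W HR HV. rewrite <- (Rnat _ _ HR). exact HV.
  - intros t t' U Phi IH V W HR HV. exact (IH _ _ (Rarr _ _ _ _ HR U) HV).
  - intros t I f IH V W HR HV i. exact (IH i _ _ HR (HV i)).
  - intros t I f IH V W HR [i HV]. exists i. exact (IH i _ _ HR HV).
  - intros t o phi IH M N HR HM.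
    set (A := fun V : cval S t => vsat sem phi (proj1_sig V)).
    apply (omod_elim (A := rimage (@Rv t) A)).
    + intros W [V [AV HR']]. exact (IH _ _ HR' AV).
    + apply (Rtree _ _ _ HR). apply omod_intro with (P := vsat sem phi); [|exact HM].
      intros V AV. exact AV.
  - intros t I f IH M N HR HM i. exact (IH i _ _ HR (HM i)).
  - intros t I f IH M N HR [i HM]. exists i. exact (IH i _ _ HR HM).
Qed.

End Soundness.

Lemma sim_v_lpre_v t (V W : cval S t) : sim_v sem V W -> lpre_v sem V W.
Proof. intros (Rv & Rc & Rsim & HR) phi. exact (proj1 (app_sim_sat Rsim) _ _ _ _ HR). Qed.

Lemma sim_c_lpre_c t (M N : ccomp S t) : sim_c sem M N -> lpre_c sem M N.
Proof. intros (Rv & Rc & Rsim & HR) Phi. exact (proj2 (app_sim_sat Rsim) _ _ _ _ HR). Qed.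

Definition vdefinable t (P : val S -> Prop) : Prop :=
  exists phi : vform S O t, forall v, vsat sem phi v <-> P v.

(* The conjunction of all formulas satisfied by [V].  It cannot range over
   [vform S O t] itself (a universe inconsistency), so it ranges over the
   definable predicates holding at [V], each with a chosen defining formula. *)
Definition char_vform t (V : cval S t) : vform S O t :=
  FVAnd (fun P : {P : val S -> Prop | vdefinable t P /\ P (proj1_sig V)} =>
           proj1_sig (constructive_indefinite_description _ (proj1 (proj2_sig P)))).

Lemma char_vform_sat t (V : cval S t) w :
  vsat sem (char_vform V) w <->
  forall phi : vform S O t, vsat sem phi (proj1_sig V) -> vsat sem phi w.
Proof.
  simpl. split.
  - intros Hw phi HV.
    specialize (Hw (exist _ (vsat sem phi) (conj (ex_intro _ phi (fun v => iff_refl _)) HV))).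
    destruct constructive_indefinite_description as [phi' Hphi']. simpl in Hw.
    apply Hphi', Hw.
  - intros Hw [P [HP PV]]. simpl.
    destruct constructive_indefinite_description as [phi' Hphi']. simpl.
    apply Hw, Hphi', PV.
Qed.

Definition union_vform t (A : cval S t -> Prop) : vform S O t :=
  FVOr (fun V : {V : cval S t | A V} => char_vform (proj1_sig V)).

Lemma lpre_is_app_sim : is_app_sim sem (@lpre_v S O sem) (@lpre_c S O sem).
Proof.
  split; [|split].
  - intros [v hv] W HVW. simpl. destruct (vty_nat_num hv) as [n ->].
    exact (eq_sym (HVW (FNum S O n) eq_refl)).
  - intros t M N HMN A o HA.
    assert (HM : csat sem (FMod o (union_vform A)) (proj1_sig M)).
    { apply (omod_elim (A := A)); [|exact HA].
      intros V AV. exists (exist _ V AV). apply char_vform_sat. auto. }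
    apply omod_intro with (P := vsat sem (union_vform A)); [|exact (HMN _ HM)].
    intros W [[V AV] HW]. exists V. split; [exact AV|].
    intros phi HV. apply (proj1 (char_vform_sat V _) HW), HV.
  - intros t' t V W HVW U Phi. exact (HVW (FMap U Phi)).
Qed.

End Logic.

Theorem theorem2 (S : signature) (O : Type) (sem : O -> tree S unit -> Prop) :
  upward_closed sem ->
  (forall (t : ty) (V W : cval S t), lpre_v sem V W <-> sim_v sem V W) /\
  (forall (t : ty) (M N : ccomp S t), lpre_c sem M N <-> sim_c sem M N).
Proof.
  intro sem_up. split.
  - intros t V W. split; [|apply sim_v_lpre_v; exact sem_up].
    intro HVW. exists (@lpre_v S O sem), (@lpre_c S O sem).
    split; [apply lpre_is_app_sim, sem_up | exact HVW].
  - intros t M N. split; [|apply sim_c_lpre_c; exact sem_up].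
    intro HMN. exists (@lpre_v S O sem), (@lpre_c S O sem).
    split; [apply lpre_is_app_sim, sem_up | exact HMN].
Qed.
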